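(* Let $A$, $B$, $Y$ be sets and let $g:A\to Y$ and $h:B\to Y$ be injective relations. Let $P$ be the set of all paths (minimal non-empty synchronisations) of $(g,h)$, each path being regarded as a pair $\langle\alpha,\beta\rangle$ with $\alpha\subseteq A$, $\beta\subseteq B$. Define relations $p:P\to A$ and $q:P\to B$ by: $\langle\alpha,\beta\rangle\,p\,a$ iff $a\in\alpha$, and $\langle\alpha,\beta\rangle\,q\,b$ iff $b\in\beta$ (so $p(\langle\alpha,\beta\rangle)=\alpha$ and $q(\langle\alpha,\beta\rangle)=\beta$). Then $p$ and $q$ are injective relations, and the square $gp=hq$ is a pullback of $g$ and $h$ in the category $\mathbf{iRel}$.
   Context: A binary relation $R:A\to Z$ (i.e. $R\subseteq A\times Z$; write $aRz$ for $\langle a,z\rangle\in R$) is injective if $aRz$ and $a'Rz$ imply $a=a'$. $\mathbf{iRel}$ is the category of sets and injective relations, with composition of relations ($R$ then $S$ written $SR$). For a relation $R:A\to Z$ and $\alpha\subseteq A$, $R(\alpha)=\{z\in Z: aRz\text{ for some }a\in\alpha\}$, and $R(a)=R(\{a\})$. Given injective relations $g:A\to Y$ and $h:B\to Y$, a synchronisation is a pair $\langle\alpha,\beta\rangle$ with $\alpha\subseteq A$, $\beta\subseteq B$ and $g(\alpha)=h(\beta)$; such pairs are identified with subsets $\alpha+\beta$ of the disjoint union $A+B$, and inclusion, intersection, union and emptiness of pairs are taken via this identification. A path is a non-empty synchronisation that is minimal with respect to inclusion among non-empty synchronisations. *)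

Set Implicit Arguments.

Definition rel (A Z : Type) := A -> Z -> Prop.

Definition rel_eq {A Z : Type} (R S : rel A Z) : Prop :=
  forall a z, R a z <-> S a z.

Definition injective_rel {A Z : Type} (R : rel A Z) : Prop :=
  forall a a' z, R a z -> R a' z -> a = a'.

(* composition "R then S", written S R *)
Definition rcomp {A Y Z : Type} (S : rel Y Z) (R : rel A Y) : rel A Z :=
  fun a z => exists y, R a y /\ S y z.

Definition rimage {A Z : Type} (R : rel A Z) (alpha : A -> Prop) : Z -> Prop :=
  fun z => exists a, alpha a /\ R a z.

Section Sync.
Variables (A B Y : Type) (g : rel A Y) (h : rel B Y).

Definition is_sync (alpha : A -> Prop) (beta : B -> Prop) : Prop :=
  forall y, rimage g alpha y <-> rimage h beta y.

(* inclusion of pairs, via alpha + beta as a subset of A + B *)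
Definition pair_sub (alpha : A -> Prop) (beta : B -> Prop)
  (alpha' : A -> Prop) (beta' : B -> Prop) : Prop :=
  (forall a, alpha a -> alpha' a) /\ (forall b, beta b -> beta' b).

Definition pair_nonempty (alpha : A -> Prop) (beta : B -> Prop) : Prop :=
  (exists a, alpha a) \/ (exists b, beta b).

Definition is_path (alpha : A -> Prop) (beta : B -> Prop) : Prop :=
  is_sync alpha beta /\ pair_nonempty alpha beta /\
  forall alpha' beta', is_sync alpha' beta' -> pair_nonempty alpha' beta' ->
    pair_sub alpha' beta' alpha beta -> pair_sub alpha beta alpha' beta'.

End Sync.

Record path (A B Y : Type) (g : rel A Y) (h : rel B Y) : Type := Path {
  path_a : A -> Prop;
  path_b : B -> Prop;
  path_ok : is_path g h path_a path_b }.

Definition path_p {A B Y : Type} (g : rel A Y) (h : rel B Y) :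
  rel (path g h) A := fun s a => path_a s a.

Definition path_q {A B Y : Type} (g : rel A Y) (h : rel B Y) :
  rel (path g h) B := fun s b => path_b s b.

Definition iRel_pullback {A B Y P : Type} (g : rel A Y) (h : rel B Y)
  (p : rel P A) (q : rel P B) : Prop :=
  rel_eq (rcomp g p) (rcomp h q) /\
  forall (X : Type) (u : rel X A) (v : rel X B),
    injective_rel u -> injective_rel v -> rel_eq (rcomp g u) (rcomp h v) ->
    exists w : rel X P,
      injective_rel w /\ rel_eq (rcomp p w) u /\ rel_eq (rcomp q w) v /\
      forall w' : rel X P, injective_rel w' ->
        rel_eq (rcomp p w') u -> rel_eq (rcomp q w') v -> rel_eq w' w.
Arguments path_p {A B Y} g h _ _.
Arguments path_q {A B Y} g h _ _.

From Stdlib Require Import Classical FunctionalExtensionality PropExtensionality ProofIrrelevance.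

Set Implicit Arguments.
Unset Strict Implicit.

(* A pair <alpha, beta> is handled as the subset alpha + beta of A + B
   ([in_pair]).  Because g and h are injective, synchronisations are closed
   under intersection and difference.  Hence, for every element e of some
   synchronisation, the intersection of all synchronisations containing e
   (its "hull") is a synchronisation, and by the difference property it is
   minimal, i.e. a path.  Two consequences carry the whole theorem:
   - every element of a synchronisation lies in a path contained in it
     ([path_through]);
   - two paths sharing an element are equal ([paths_meet_eq]); this gives
     injectivity of p and q.
   For a commuting square g u = h v, each <u x, v x> is a synchronisation;
   the mediating relation relates x to the paths contained in <u x, v x>,
   and a relation w factors u and v through p and q exactly when the paths
   w-related to x cover <u x, v x> ([factors_iff_covers]), which yields both
   existence and uniqueness of the mediator. *)

Definition in_pair {A B : Type} (alpha : A -> Prop) (beta : B -> Prop)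
  (e : A + B) : Prop :=
  match e with inl a => alpha a | inr b => beta b end.

Lemma pair_nonempty_in_pair {A B : Type} (alpha : A -> Prop) (beta : B -> Prop) :
  pair_nonempty alpha beta <-> exists e, in_pair alpha beta e.
Proof.
  split.
  - intros [[a Ha]|[b Hb]]; [exists (inl a) | exists (inr b)]; assumption.
  - intros [[a|b] He]; [left; exists a | right; exists b]; assumption.
Qed.

Section Paths.
Variables (A B Y : Type) (g : rel A Y) (h : rel B Y).
Hypothesis g_inj : injective_rel g.
Hypothesis h_inj : injective_rel h.

Lemma sync_inter al be al' be' :
  is_sync g h al be -> is_sync g h al' be' ->
  is_sync g h (fun a => al a /\ al' a) (fun b => be b /\ be' b).
Proof.
  intros S S' y; split.
  - intros [a [[Ha Ha'] Hg]].
    destruct (proj1 (S y) (ex_intro _ a (conj Ha Hg))) as [b [Hb Hh]].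
    destruct (proj1 (S' y) (ex_intro _ a (conj Ha' Hg))) as [b' [Hb' Hh']].
    rewrite (h_inj Hh Hh') in Hb. exists b'; tauto.
  - intros [b [[Hb Hb'] Hh]].
    destruct (proj2 (S y) (ex_intro _ b (conj Hb Hh))) as [a [Ha Hg]].
    destruct (proj2 (S' y) (ex_intro _ b (conj Hb' Hh))) as [a' [Ha' Hg']].
    rewrite (g_inj Hg Hg') in Ha. exists a'; tauto.
Qed.

Lemma sync_diff al be al' be' :
  is_sync g h al be -> is_sync g h al' be' ->
  is_sync g h (fun a => al a /\ ~ al' a) (fun b => be b /\ ~ be' b).
Proof.
  intros S S' y; split.
  - intros [a [[Ha Na] Hg]].
    destruct (proj1 (S y) (ex_intro _ a (conj Ha Hg))) as [b [Hb Hh]].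
    exists b; repeat split; [assumption | | assumption]. intro Hb'.
    destruct (proj2 (S' y) (ex_intro _ b (conj Hb' Hh))) as [a' [Ha' Hg']].
    rewrite (g_inj Hg Hg') in Na. tauto.
  - intros [b [[Hb Nb] Hh]].
    destruct (proj2 (S y) (ex_intro _ b (conj Hb Hh))) as [a [Ha Hg]].
    exists a; repeat split; [assumption | | assumption]. intro Ha'.
    destruct (proj1 (S' y) (ex_intro _ a (conj Ha' Hg))) as [b' [Hb' Hh']].
    rewrite (h_inj Hh Hh') in Nb. tauto.
Qed.

Definition hull_a (e : A + B) : A -> Prop :=
  fun a => forall al be, is_sync g h al be -> in_pair al be e -> al a.
Definition hull_b (e : A + B) : B -> Prop :=
  fun b => forall al be, is_sync g h al be -> in_pair al be e -> be b.

Lemma hull_mem e : in_pair (hull_a e) (hull_b e) e.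
Proof. destruct e; intros al be _ He; exact He. Qed.

Lemma hull_least e al be : is_sync g h al be -> in_pair al be e ->
  pair_sub (hull_a e) (hull_b e) al be.
Proof. intros S He; split; intros x Hx; exact (Hx _ _ S He). Qed.

(* If some synchronisation contains e, so does the hull: the element of the
   other side matched with a hull element is unique, hence in every
   synchronisation containing e. *)
Lemma hull_sync e al0 be0 : is_sync g h al0 be0 -> in_pair al0 be0 e ->
  is_sync g h (hull_a e) (hull_b e).
Proof.
  intros S0 He y; split.
  - intros [a [Ha Hg]].
    destruct (proj1 (S0 y) (ex_intro _ a (conj (Ha _ _ S0 He) Hg)))
      as [b0 [_ Hh0]].
    exists b0; split; [|assumption]. intros al be S Hin.
    destruct (proj1 (S y) (ex_intro _ a (conj (Ha _ _ S Hin) Hg))) as [b [Hb Hh]].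
    rewrite (h_inj Hh0 Hh). exact Hb.
  - intros [b [Hb Hh]].
    destruct (proj2 (S0 y) (ex_intro _ b (conj (Hb _ _ S0 He) Hh)))
      as [a0 [_ Hg0]].
    exists a0; split; [|assumption]. intros al be S Hin.
    destruct (proj2 (S y) (ex_intro _ b (conj (Hb _ _ S Hin) Hh))) as [a [Ha Hg]].
    rewrite (g_inj Hg0 Hg). exact Ha.
Qed.

(* The hull is minimal: a non-empty synchronisation inside it either
   contains e (then it contains the hull), or removing it from the hull
   leaves a synchronisation containing e, forcing it to be empty. *)
Lemma hull_path e al0 be0 : is_sync g h al0 be0 -> in_pair al0 be0 e ->
  is_path g h (hull_a e) (hull_b e).
Proof.
  intros S0 He.
  pose proof (hull_sync S0 He) as S.
  split; [exact S | split].
  - apply pair_nonempty_in_pair. exists e. apply hull_mem.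
  - intros al be S' Ne [Sa Sb].
    destruct (classic (in_pair al be e)) as [Hin | Hout].
    + exact (hull_least S' Hin).
    + exfalso.
      assert (Hdiff : pair_sub (hull_a e) (hull_b e)
                (fun a => hull_a e a /\ ~ al a) (fun b => hull_b e b /\ ~ be b)).
      { apply hull_least; [exact (sync_diff S S') |].
        pose proof (hull_mem e). destruct e; simpl in *; tauto. }
      destruct Hdiff as [Da Db].
      destruct Ne as [[a Ha]|[b Hb]].
      * exact (proj2 (Da a (Sa a Ha)) Ha).
      * exact (proj2 (Db b (Sb b Hb)) Hb).
Qed.

Definition path_mem (s : path g h) (e : A + B) : Prop :=
  in_pair (path_a s) (path_b s) e.

Lemma path_through al be e : is_sync g h al be -> in_pair al be e ->
  exists s : path g h, path_mem s e /\ pair_sub (path_a s) (path_b s) al be.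
Proof.
  intros S He.
  exists (Path (hull_path S He)); split.
  - apply hull_mem.
  - exact (hull_least S He).
Qed.

Lemma path_nonempty (s : path g h) : exists e, path_mem s e.
Proof. apply pair_nonempty_in_pair, (path_ok s). Qed.

(* Two paths with a common element are equal: their intersection is a
   non-empty synchronisation, so by minimality both equal it. *)
Lemma paths_meet_eq (s s' : path g h) e :
  path_mem s e -> path_mem s' e -> s = s'.
Proof.
  intros He He'.
  destruct s as [al be [Sync [? Min]]], s' as [al' be' [Sync' [? Min']]].
  unfold path_mem in *; simpl in *.
  pose proof (sync_inter Sync Sync') as Si.
  assert (Ni : pair_nonempty (fun a => al a /\ al' a) (fun b => be b /\ be' b)).
  { apply pair_nonempty_in_pair. exists e. destruct e; simpl in *; tauto. }
  destruct (Min _ _ Si Ni) as [Ha Hb]; [split; intros; tauto |].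
  destruct (Min' _ _ Si Ni) as [Ha' Hb']; [split; intros; tauto |].
  assert (al = al') as <-.
  { extensionality a. apply propositional_extensionality.
    split; intro Hz; [apply Ha | apply Ha']; assumption. }
  assert (be = be') as <-.
  { extensionality b. apply propositional_extensionality.
    split; intro Hz; [apply Hb | apply Hb']; assumption. }
  f_equal. apply proof_irrelevance.
Qed.

Lemma path_p_injective : injective_rel (path_p g h).
Proof. intros s s' a Ha Ha'. exact (@paths_meet_eq s s' (inl a) Ha Ha'). Qed.

Lemma path_q_injective : injective_rel (path_q g h).
Proof. intros s s' b Hb Hb'. exact (@paths_meet_eq s s' (inr b) Hb Hb'). Qed.

Lemma path_square : rel_eq (rcomp g (path_p g h)) (rcomp h (path_q g h)).
Proof. intros s y. exact (proj1 (path_ok s) y). Qed.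

Lemma factors_iff_covers (X : Type) (u : rel X A) (v : rel X B)
  (w : rel X (path g h)) :
  (rel_eq (rcomp (path_p g h) w) u /\ rel_eq (rcomp (path_q g h) w) v) <->
  (forall x e, in_pair (u x) (v x) e <-> exists s, w x s /\ path_mem s e).
Proof.
  split.
  - intros [Hp Hq] x [a|b]; [exact (iff_sym (Hp x a)) | exact (iff_sym (Hq x b))].
  - intros Hc; split; intros x z; [exact (iff_sym (Hc x (inl z)))
                                   | exact (iff_sym (Hc x (inr z)))].
Qed.

Section Mediator.
Variables (X : Type) (u : rel X A) (v : rel X B).
Hypothesis uv_comm : rel_eq (rcomp g u) (rcomp h v).

Lemma commuting_sync x : is_sync g h (u x) (v x).
Proof. intro y. exact (uv_comm x y). Qed.

Definition mediator : rel X (path g h) :=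
  fun x s => pair_sub (path_a s) (path_b s) (u x) (v x).

Lemma mediator_covers x e :
  in_pair (u x) (v x) e <-> exists s, mediator x s /\ path_mem s e.
Proof.
  split.
  - intros He.
    destruct (path_through (commuting_sync x) He) as [s [Hs Hsub]].
    exists s; split; assumption.
  - intros [s [[Sa Sb] Hs]]. destruct e; simpl; [apply Sa | apply Sb]; exact Hs.
Qed.

(* Two points sharing a (non-empty) path share an element of A or of B. *)
Lemma mediator_injective :
  injective_rel u -> injective_rel v -> injective_rel mediator.
Proof.
  intros u_inj v_inj x x' s [Ua Ub] [Ua' Ub'].
  destruct (path_nonempty s) as [[a|b] He].
  - exact (u_inj _ _ _ (Ua _ He) (Ua' _ He)).
  - exact (v_inj _ _ _ (Ub _ He) (Ub' _ He)).
Qed.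

(* Any relation whose related paths cover <u x, v x> is the mediator: a
   related path is inside <u x, v x>, and a path inside it meets, hence
   equals, one of the related paths. *)
Lemma mediator_unique (w : rel X (path g h)) :
  (forall x e, in_pair (u x) (v x) e <-> exists s, w x s /\ path_mem s e) ->
  rel_eq w mediator.
Proof.
  intros Hc x s; split.
  - intros Hw; split; intros z Hz;
      [exact (proj2 (Hc x (inl z)) (ex_intro _ s (conj Hw Hz)))
      | exact (proj2 (Hc x (inr z)) (ex_intro _ s (conj Hw Hz)))].
  - intros Hm.
    destruct (path_nonempty s) as [e He].
    destruct (proj1 (Hc x e) (proj2 (mediator_covers x e)
                                (ex_intro _ s (conj Hm He)))) as [s' [Hw He']].
    rewrite (paths_meet_eq He He'). exact Hw.
Qed.

End Mediator.
End Paths.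

Theorem theorem1 (A B Y : Type) (g : rel A Y) (h : rel B Y) :
  injective_rel g -> injective_rel h ->
  injective_rel (path_p g h) /\ injective_rel (path_q g h) /\
  iRel_pullback g h (path_p g h) (path_q g h).
Proof.
  intros g_inj h_inj.
  split; [exact (path_p_injective g_inj h_inj) |].
  split; [exact (path_q_injective g_inj h_inj) |].
  split; [exact (@path_square A B Y g h) |].
  intros X u v u_inj v_inj uv_comm.
  exists (mediator u v).
  split; [exact (mediator_injective u_inj v_inj) |].
  destruct (proj2 (factors_iff_covers u v (mediator u v))
                  (mediator_covers g_inj h_inj uv_comm)) as [med_p med_q].
  split; [exact med_p | split; [exact med_q |]].
  intros w _ Hp Hq.
  apply (mediator_unique g_inj h_inj uv_comm).
  exact (proj1 (factors_iff_covers u v w) (conj Hp Hq)).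
Qed.
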